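(* Let $\alpha$ be a curve in $\mathbb{R}^3$ with nonzero curvature, let $\alpha_T$ be its tangent indicatrix, and let $\beta$ be an evolute-direction curve of $\alpha_T$ (an $X$-direction curve of $\alpha_T$ with $N_\beta=T_T$). Then: (i) $\alpha$ is a helix if and only if $\beta$ is a helix; (ii) $\alpha$ is a slant helix if and only if $\beta$ is a slant helix.
   Context: Let $\alpha:I\subset\mathbb{R}\to\mathbb{R}^3$ be a unit-speed curve with arc length $s$, curvature $\kappa>0$, torsion $\tau$ and Frenet frame $\{T,N,B\}$. The tangent indicatrix of $\alpha$ is the curve $\alpha_T=T$ on the unit sphere. Its arc length is $s_T=\int\kappa\,ds$. Its Frenet apparatus is $\{T_T,N_T,B_T,\kappa_T,\tau_T\}$, with $\frac{dT_T}{ds_T}=\kappa_TN_T$, $\frac{dN_T}{ds_T}=-\kappa_TT_T+\tau_TB_T$ and $\frac{dB_T}{ds_T}=-\tau_TN_T$. Let $x,y,z$ be real functions of $s_T$ with $x^2+y^2+z^2=1$, and set $X=xT_T+yN_T+zB_T$. An integral curve $\beta$ of $X$, meaning $d\beta/ds_T=X$, is an $X$-direction curve of $\alpha_T$. It is regarded as a unit-speed Frenet curve with frame $\{T_\beta=X,N_\beta,B_\beta\}$, curvature $\kappa_\beta>0$ and torsion $\tau_\beta$. $\beta$ is an evolute-direction curve of $\alpha_T$ if $N_\beta=T_T$. A curve with curvature $k>0$ and torsion $t$ is a helix if its unit tangent makes a constant angle with a fixed line; equivalently, $t/k$ is constant. It is a slant helix if its principal normal makes a constant angle with a fixed line; equivalently,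 $\frac{k^2}{(k^2+t^2)^{3/2}}(t/k)'$ is constant, where $'$ is the derivative with respect to arc length. *)

From Stdlib Require Import Reals.
From Coquelicot Require Import Coquelicot.
Open Scope R_scope.

Definition V3 : Type := (R * R * R)%type.
Definition v1 (v : V3) : R := fst (fst v).
Definition v2 (v : V3) : R := snd (fst v).
Definition v3 (v : V3) : R := snd v.

Definition vadd (u v : V3) : V3 := (v1 u + v1 v, v2 u + v2 v, v3 u + v3 v).
Definition vscal (a : R) (v : V3) : V3 := (a * v1 v, a * v2 v, a * v3 v).
Definition dot (u v : V3) : R := v1 u * v1 v + v2 u * v2 v + v3 u * v3 v.
Definition cross (u v : V3) : V3 :=
  (v2 u * v3 v - v3 u * v2 v,
   v3 u * v1 v - v1 u * v3 v,
   v1 u * v2 v - v2 u * v1 v).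

Definition is_open_int (I : R -> Prop) : Prop :=
  exists a b : Rbar, Rbar_lt a b /\
    forall s : R, I s <-> (Rbar_lt a s /\ Rbar_lt s b).

Definition frenet_curve (I : R -> Prop) (g T N B : R -> V3) (k t : R -> R)
  : Prop :=
  forall s : R, I s ->
    is_derive g s (T s) /\
    is_derive T s (vscal (k s) (N s)) /\
    is_derive N s (vadd (vscal (- k s) (T s)) (vscal (t s) (B s))) /\
    is_derive B s (vscal (- t s) (N s)) /\
    0 < k s /\
    dot (T s) (T s) = 1 /\ dot (N s) (N s) = 1 /\ dot (T s) (N s) = 0 /\
    B s = cross (T s) (N s).

Definition image_of (I : R -> Prop) (f : R -> R) : R -> Prop :=
  fun u => exists s, I s /\ f s = u.

(* The vector field V makes a constant angle with a fixed line
   (direction given by the unit vector u): <V, u> = cos(angle) is constant. *)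
Definition const_angle_with_line (I : R -> Prop) (V : R -> V3) : Prop :=
  exists u : V3, dot u u = 1 /\ exists c : R, forall s, I s -> dot (V s) u = c.

Definition is_helix (I : R -> Prop) (T : R -> V3) : Prop :=
  const_angle_with_line I T.

Definition is_slant_helix (I : R -> Prop) (N : R -> V3) : Prop :=
  const_angle_with_line I N.

Definition dir_field (x y z : R -> R) (TT NT BT : R -> V3) (u : R) : V3 :=
  vadd (vadd (vscal (x u) (TT u)) (vscal (y u) (NT u))) (vscal (z u) (BT u)).

(* By the chain rule, differentiating [alpha_T (s_T s) = T s] gives
   [kappa T_T = T' = kappa N], so [T_T = N] along the curve; hence [N_beta = N],
   which settles the slant-helix part.  For the helix part, [T' = kappa N] and
   [(d/ds) X = kappa kappa_beta N_beta = kappa kappa_beta N] with both factors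
   positive, so for a fixed unit vector [u] each of [<T, u>] and [<X, u>] is
   constant exactly when [<N, u> = 0]. *)
From Stdlib Require Import Reals Lra Classical.
From Coquelicot Require Import Coquelicot.
Open Scope R_scope.

Lemma is_derive_fst {U V : NormedModule R_AbsRing} (f : R -> U * V) s l :
  is_derive f s l -> is_derive (fun t => fst (f t)) s (fst l).
Proof.
  intros Hf.
  apply (filterdiff_comp f (fun p : U * V => fst p) _ (fun p : U * V => fst p) Hf).
  apply filterdiff_linear, is_linear_fst.
Qed.

Lemma is_derive_snd {U V : NormedModule R_AbsRing} (f : R -> U * V) s l :
  is_derive f s l -> is_derive (fun t => snd (f t)) s (snd l).
Proof.
  intros Hf.
  apply (filterdiff_comp f (fun p : U * V => snd p) _ (fun p : U * V => snd p) Hf).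
  apply filterdiff_linear, is_linear_snd.
Qed.

Lemma is_derive_dot_l (f : R -> V3) (u : V3) s l :
  is_derive f s l -> is_derive (fun t => dot (f t) u) s (dot l u).
Proof.
  intros Hf.
  assert (H1 := is_derive_fst _ _ _ (is_derive_fst _ _ _ Hf)).
  assert (H2 := is_derive_snd _ _ _ (is_derive_fst _ _ _ Hf)).
  assert (H3 := is_derive_snd _ _ _ Hf).
  apply (is_derive_scal _ _ (v1 u)) in H1.
  apply (is_derive_scal _ _ (v2 u)) in H2.
  apply (is_derive_scal _ _ (v3 u)) in H3.
  assert (H := is_derive_plus _ _ _ _ _ (is_derive_plus _ _ _ _ _ H1 H2) H3).
  replace (dot l u) with (plus (plus (scal (v1 u) (v1 l)) (scal (v2 u) (v2 l)))
                               (scal (v3 u) (v3 l))).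
  - revert H. apply is_derive_ext. intros t.
    unfold dot, v1, v2, v3, plus, scal; simpl; unfold mult; simpl; ring.
  - unfold dot, v1, v2, v3, plus, scal; simpl; unfold mult; simpl; ring.
Qed.

Lemma scal_V3 (a : R) (v : V3) : scal a v = vscal a v.
Proof. destruct v as [[p q] r]. reflexivity. Qed.

Lemma vscal_vscal (a b : R) (v : V3) : vscal a (vscal b v) = vscal (a * b) v.
Proof. unfold vscal, v1, v2, v3; simpl. f_equal; [f_equal|]; ring. Qed.

Lemma dot_vscal_l (a : R) (v u : V3) : dot (vscal a v) u = a * dot v u.
Proof. unfold dot, vscal, v1, v2, v3; simpl. ring. Qed.

Lemma V3_eq_dot (p q : V3) : (forall u, dot p u = dot q u) -> p = q.
Proof.
  destruct p as [[p1 p2] p3], q as [[q1 q2] q3]; intros Hpq.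
  pose proof (Hpq (1, 0, 0)) as E1.
  pose proof (Hpq (0, 1, 0)) as E2.
  pose proof (Hpq (0, 0, 1)) as E3.
  unfold dot, v1, v2, v3 in E1, E2, E3; simpl in E1, E2, E3.
  f_equal; [f_equal|]; lra.
Qed.

Lemma is_open_int_locally (I : R -> Prop) s :
  is_open_int I -> I s -> locally s I.
Proof.
  intros [a [b [_ HI]]] Hs.
  assert (Hopen : @open R_UniformSpace (fun t => Rbar_lt a t /\ Rbar_lt t b)).
  { apply open_and; [apply open_Rbar_gt | apply open_Rbar_lt]. }
  eapply filter_imp; [| exact (Hopen s (proj1 (HI s) Hs))].
  intros t Ht. apply HI, Ht.
Qed.

Lemma is_open_int_between (I : R -> Prop) s1 s2 t :
  is_open_int I -> I s1 -> I s2 -> Rmin s1 s2 <= t <= Rmax s1 s2 -> I t.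
Proof.
  intros [a [b [_ HI]]] H1 H2 Ht.
  apply HI in H1 as [Ha1 Hb1]. apply HI in H2 as [Ha2 Hb2]. apply HI.
  unfold Rmin, Rmax in Ht. destruct (Rle_dec s1 s2); split.
  - apply (Rbar_lt_le_trans _ s1); [assumption | simpl; lra].
  - apply (Rbar_le_lt_trans _ s2); [simpl; lra | assumption].
  - apply (Rbar_lt_le_trans _ s2); [assumption | simpl; lra].
  - apply (Rbar_le_lt_trans _ s1); [simpl; lra | assumption].
Qed.

Lemma is_derive_const_on_open_int (I : R -> Prop) (f : R -> R) c s l :
  is_open_int I -> I s -> (forall t, I t -> f t = c) -> is_derive f s l -> l = 0.
Proof.
  intros HI Hs Hc Hf.
  assert (H0 : is_derive f s 0).
  { apply (is_derive_ext_loc (fun _ => c)).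
    - eapply filter_imp; [| exact (is_open_int_locally I s HI Hs)].
      intros t Ht. symmetry. apply Hc, Ht.
    - apply (is_derive_const (K := R_AbsRing) (V := R_NormedModule)). }
  rewrite <- (is_derive_unique _ _ _ Hf). apply is_derive_unique, H0.
Qed.

Lemma const_on_open_int_of_derive0 (I : R -> Prop) (f : R -> R) s1 s2 :
  is_open_int I -> (forall s, I s -> is_derive f s 0) -> I s1 -> I s2 ->
  f s1 = f s2.
Proof.
  intros HI Hf H1 H2.
  assert (Hin : forall t, Rmin s1 s2 <= t <= Rmax s1 s2 -> I t)
    by (intros t; apply is_open_int_between; assumption).
  destruct (MVT_gen f s1 s2 (fun _ => 0)) as [c [_ Hc]].
  - intros t Ht. apply Hf, Hin. lra.
  - intros t Ht. apply continuity_pt_filterlim.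
    apply (ex_derive_continuous (K := R_AbsRing) (V := R_NormedModule)).
    exists 0. apply Hf, Hin, Ht.
  - lra.
Qed.

Lemma dot_const_iff_orthogonal (I : R -> Prop) (V W : R -> V3) (k : R -> R) u :
  is_open_int I ->
  (forall s, I s -> is_derive V s (vscal (k s) (W s)) /\ 0 < k s) ->
  (exists c, forall s, I s -> dot (V s) u = c) <->
  (forall s, I s -> dot (W s) u = 0).
Proof.
  intros HI HV.
  assert (HdV : forall s, I s ->
            is_derive (fun t => dot (V t) u) s (k s * dot (W s) u)).
  { intros s Hs. rewrite <- dot_vscal_l. apply is_derive_dot_l, HV, Hs. }
  split.
  - intros [c Hc] s Hs.
    pose proof (is_derive_const_on_open_int I _ c s _ HI Hs Hc (HdV s Hs)) as E.
    destruct (Rmult_integral _ _ E) as [Ek | EW]; [| exact EW].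
    pose proof (proj2 (HV s Hs)). lra.
  - intros HW.
    destruct (classic (exists s0, I s0)) as [[s0 Hs0] | Hempty].
    + exists (dot (V s0) u). intros s Hs.
      apply (const_on_open_int_of_derive0 I (fun t => dot (V t) u));
        [exact HI | | exact Hs | exact Hs0].
      intros t Ht. rewrite <- (Rmult_0_r (k t)), <- (HW t Ht). apply HdV, Ht.
    + exists 0. intros s Hs. exfalso. apply Hempty. exists s. exact Hs.
Qed.

Lemma const_angle_with_line_iff_orthogonal (I : R -> Prop) (V W : R -> V3)
    (k : R -> R) :
  is_open_int I ->
  (forall s, I s -> is_derive V s (vscal (k s) (W s)) /\ 0 < k s) ->
  const_angle_with_line I V <->
  exists u, dot u u = 1 /\ forall s, I s -> dot (W s) u = 0.
Proof.
  intros HI HV. unfold const_angle_with_line.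
  split; intros [u [Hu H]]; exists u; split; try exact Hu;
    apply (dot_const_iff_orthogonal I V W k u HI HV), H.
Qed.

Lemma const_angle_with_line_image (I : R -> Prop) (f : R -> R) (V : R -> V3) :
  const_angle_with_line (image_of I f) V <->
  const_angle_with_line I (fun s => V (f s)).
Proof.
  split; intros [u [Hu [c Hc]]]; exists u; split; try exact Hu; exists c.
  - intros s Hs. apply Hc. exists s. split; [exact Hs | reflexivity].
  - intros v [s [Hs <-]]. apply Hc, Hs.
Qed.

Lemma const_angle_with_line_ext (I : R -> Prop) (V W : R -> V3) :
  (forall s, I s -> V s = W s) ->
  const_angle_with_line I V <-> const_angle_with_line I W.
Proof.
  intros HVW.
  split; intros [u [Hu [c Hc]]]; exists u; split; try exact Hu; exists c;
    intros s Hs; [rewrite <- HVW | rewrite HVW]; auto.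
Qed.

Lemma tangent_indicatrix_tangent_eq_normal (I : R -> Prop) (T N : R -> V3)
    (kappa sT : R -> R) (alphaT TT : R -> V3) s :
  is_open_int I -> I s ->
  is_derive T s (vscal (kappa s) (N s)) -> 0 < kappa s ->
  is_derive sT s (kappa s) ->
  (forall t, I t -> alphaT (sT t) = T t) ->
  is_derive alphaT (sT s) (TT (sT s)) ->
  TT (sT s) = N s.
Proof.
  intros HI Hs HT Hk HsT HaT HaTd.
  assert (HT' : is_derive T s (vscal (kappa s) (TT (sT s)))).
  { rewrite <- scal_V3.
    apply (is_derive_ext_loc (fun t => alphaT (sT t))).
    - eapply filter_imp; [| exact (is_open_int_locally I s HI Hs)].
      intros t Ht. apply HaT, Ht.
    - exact (is_derive_comp alphaT sT s _ _ HaTd HsT). }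
  apply V3_eq_dot. intros u.
  apply (Rmult_eq_reg_l (kappa s)); [| lra].
  rewrite <- !dot_vscal_l.
  rewrite <- (is_derive_unique _ _ _ (is_derive_dot_l _ u _ _ HT')).
  apply is_derive_unique, is_derive_dot_l, HT.
Qed.

Theorem theorem4p7
  (I : R -> Prop) (alpha T N B : R -> V3) (kappa tau : R -> R)
  (sT : R -> R) (alphaT TT NT BT : R -> V3) (kT tT : R -> R)
  (x y z : R -> R) (beta Nb Bb : R -> V3) (kb tb : R -> R) :
  is_open_int I ->
  (* alpha: unit-speed curve with Frenet apparatus {T,N,B,kappa>0,tau} *)
  frenet_curve I alpha T N B kappa tau ->
  (* s_T = int kappa ds : arc length of the tangent indicatrix *)
  (forall s, I s -> is_derive sT s (kappa s)) ->
  (* alpha_T = T, parametrized by s_T *)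
  (forall s, I s -> alphaT (sT s) = T s) ->
  (* Frenet apparatus of alpha_T w.r.t. s_T *)
  frenet_curve (image_of I sT) alphaT TT NT BT kT tT ->
  (* X = x T_T + y N_T + z B_T with x^2+y^2+z^2 = 1 *)
  (forall u, image_of I sT u -> x u ^ 2 + y u ^ 2 + z u ^ 2 = 1) ->
  (* beta: X-direction curve of alpha_T, unit-speed Frenet curve with T_beta = X *)
  frenet_curve (image_of I sT) beta (dir_field x y z TT NT BT) Nb Bb kb tb ->
  (* evolute-direction curve: N_beta = T_T *)
  (forall u, image_of I sT u -> Nb u = TT u) ->
  (is_helix I T <-> is_helix (image_of I sT) (dir_field x y z TT NT BT)) /\
  (is_slant_helix I N <-> is_slant_helix (image_of I sT) Nb).
Proof.
  intros HI Falpha HsT HaT FalphaT _ Fbeta HNb.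
  set (X := dir_field x y z TT NT BT) in *.
  assert (Himg : forall s, I s -> image_of I sT (sT s))
    by (intros s Hs; exists s; split; [exact Hs | reflexivity]).
  assert (HdT : forall s, I s -> is_derive T s (vscal (kappa s) (N s)) /\ 0 < kappa s)
    by (intros s Hs; split; apply Falpha, Hs).
  assert (HNbN : forall s, I s -> Nb (sT s) = N s).
  { intros s Hs. rewrite HNb by apply Himg, Hs.
    apply (tangent_indicatrix_tangent_eq_normal I T N kappa sT alphaT TT s HI Hs);
      [apply HdT, Hs | apply HdT, Hs | apply HsT, Hs | exact HaT |
       apply FalphaT, Himg, Hs]. }
  assert (HdX : forall s, I s ->
            is_derive (fun t => X (sT t)) s (vscal (kappa s * kb (sT s)) (N s)) /\
            0 < kappa s * kb (sT s)).
  { intros s Hs.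
    destruct (Fbeta (sT s) (Himg s Hs)) as [_ [HX [_ [_ [Hkb _]]]]].
    split; [| apply Rmult_lt_0_compat; [apply HdT, Hs | exact Hkb]].
    rewrite <- vscal_vscal, <- HNbN, <- scal_V3 by exact Hs.
    exact (is_derive_comp X sT s _ _ HX (HsT s Hs)). }
  split.
  - unfold is_helix.
    rewrite const_angle_with_line_image,
      (const_angle_with_line_iff_orthogonal I T N kappa HI HdT),
      (const_angle_with_line_iff_orthogonal I _ N _ HI HdX).
    reflexivity.
  - unfold is_slant_helix. rewrite const_angle_with_line_image.
    apply const_angle_with_line_ext. intros s Hs. symmetry. apply HNbN, Hs.
Qed.
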